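(* Let $v_1\ge v_2>0$ with $v_2<2$. A strategy profile $(X,Y)$ is a Nash equilibrium of the discrete all-pay auction with valuations $v_1,v_2$ if and only if $Y=\delta_0$ and: if $v_1/2>1$ then $X=\delta_1$; if $v_1/2=1$ then $X=(1-\alpha)\delta_0+\alpha\delta_1$ for some $\alpha\in[0,1]$; if $v_1/2<1$ then $X=\delta_0$.
   Context: Discrete all-pay auction: two players, 1 and 2, value a prize at $v_1$ and $v_2$ respectively, where $v_1\ge v_2>0$. A (mixed) strategy is a probability distribution on $\mathbb{Z}_{\ge 0}$ with finite mean, identified with a $\mathbb{Z}_{\ge0}$-valued random variable; the two players' choices are independent. If player 1 uses $X$ and player 2 uses $Y$, the expected payoffs are $P^1(X,Y)=v_1\Pr(X>Y)+\frac{v_1}{2}\Pr(X=Y)-\mathbf{E}(X)$ and $P^2(Y,X)=v_2\Pr(Y>X)+\frac{v_2}{2}\Pr(X=Y)-\mathbf{E}(Y)$. A Nash equilibrium of the all-pay auction is a pair $(X,Y)$ with $P^1(X,Y)\ge P^1(X',Y)$ and $P^2(Y,X)\ge P^2(Y',X)$ for all strategies $X',Y'$. $\delta_j$ denotes the point mass at $j$; $(1-\alpha)\delta_0+\alpha\delta_1$ is the mixture. *)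

From Stdlib Require Import Reals Lra.
From Coquelicot Require Import Coquelicot.
Open Scope R_scope.

Definition is_strategy (p : nat -> R) : Prop :=
  (forall n, 0 <= p n) /\ is_series p 1 /\ ex_series (fun n => INR n * p n).

Definition mean (p : nat -> R) : R := Series (fun n => INR n * p n).

(* lt_mass q n = Pr(Y < n) = sum_{m<n} q m *)
Fixpoint lt_mass (q : nat -> R) (n : nat) : R :=
  match n with
  | O => 0
  | S k => lt_mass q k + q k
  end.

Definition prob_gt (p q : nat -> R) : R := Series (fun n => p n * lt_mass q n).

Definition prob_eq (p q : nat -> R) : R := Series (fun n => p n * q n).

Definition payoff (v : R) (p q : nat -> R) : R :=
  v * prob_gt p q + v / 2 * prob_eq p q - mean p.

Definition nash (v1 v2 : R) (p q : nat -> R) : Prop :=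
  is_strategy p /\ is_strategy q /\
  (forall p', is_strategy p' -> payoff v1 p' q <= payoff v1 p q) /\
  (forall q', is_strategy q' -> payoff v2 q' p <= payoff v2 q p).

Definition delta (j : nat) : nat -> R := fun n => if Nat.eqb n j then 1 else 0.

(* Expected payoffs are averages of the payoffs of pure bids, so a best
   response is supported on the pure bids attaining the best pure payoff.
   Against any strategy of player 1, a bid n >= 1 of player 2 raises the
   expected prize over the zero bid by at most v2/2 + (n - 1) but costs n, so it
   loses at least 1 - v2/2 > 0: player 2 bids 0 in every equilibrium, and the
   zero bid is always a best response for her.  Against the zero bid, player 1
   earns v1/2 by bidding 0 and v1 - n by bidding n >= 1, so the maximisers are
   1, both 0 and 1, or 0 according as v1/2 > 1, = 1 or < 1. *)

From Stdlib Require Import Reals Lra Lia FunctionalExtensionality.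
From Coquelicot Require Import Coquelicot.
Open Scope R_scope.

Lemma is_series_lincomb (x y : R) (a b : nat -> R) (la lb : R) :
  is_series a la -> is_series b lb ->
  is_series (fun n => x * a n + y * b n) (x * la + y * lb).
Proof.
  intros Ha Hb.
  exact (is_series_plus (V := R_NormedModule) _ _ _ _
           (is_series_scal_l x a la Ha) (is_series_scal_l y b lb Hb)).
Qed.

Lemma is_series_finite_support (a : nat -> R) (K : nat) :
  (forall n, (K < n)%nat -> a n = 0) -> is_series a (sum_n a K).
Proof.
  intros Ha.
  assert (Hstable : forall d, sum_n a (K + d) = sum_n a K).
  { induction d as [|d IH]; [now rewrite Nat.add_0_r|].
    rewrite Nat.add_succ_r, sum_Sn, IH, Ha by lia. apply Rplus_0_r. }
  enough (Hlim : is_lim_seq (sum_n a) (sum_n a K)) by exact Hlim.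
  apply (is_lim_seq_ext_loc (fun _ => sum_n a K)); [|apply is_lim_seq_const].
  exists K. intros N HN. replace N with (K + (N - K))%nat by lia.
  now rewrite Hstable.
Qed.

Lemma is_series_single_support (a : nat -> R) (k : nat) :
  (forall n, n <> k -> a n = 0) -> is_series a (a k).
Proof.
  intros Ha.
  replace (a k) with (sum_n a k).
  - apply is_series_finite_support. intros n Hn. apply Ha. lia.
  - destruct k as [|k]; [apply sum_O|].
    rewrite sum_Sn, (sum_n_ext_loc a (fun _ => 0)), sum_n_const.
    + unfold plus; simpl. ring.
    + intros n Hn. apply Ha. lia.
Qed.

Lemma sum_n_le_is_series (a : nat -> R) (l : R) :
  (forall n, 0 <= a n) -> is_series a l -> forall N, sum_n a N <= l.
Proof.
  intros Ha Hl. apply is_lim_seq_incr_compare; [exact Hl|].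
  intros n. rewrite sum_Sn. unfold plus; simpl. specialize (Ha (S n)). lra.
Qed.

Lemma is_series_term_le (a : nat -> R) (l : R) :
  (forall n, 0 <= a n) -> is_series a l -> forall k, a k <= l.
Proof.
  intros Ha Hl k.
  set (ak := fun n => if Nat.eqb n k then a n else 0).
  assert (Hak : is_series ak (a k)).
  { replace (a k) with (ak k) by (unfold ak; now rewrite Nat.eqb_refl).
    apply is_series_single_support. intros n Hn. unfold ak.
    now rewrite (proj2 (Nat.eqb_neq n k) Hn). }
  rewrite <- (is_series_unique _ _ Hak), <- (is_series_unique _ _ Hl).
  apply Series_le; [|now exists l].
  intros n. unfold ak. specialize (Ha n). destruct (Nat.eqb n k); lra.
Qed.

Lemma lt_mass_S (q : nat -> R) (n : nat) : lt_mass q (S n) = sum_n q n.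
Proof.
  induction n as [|n IH]; [rewrite sum_O; simpl; ring|].
  rewrite sum_Sn, <- IH. reflexivity.
Qed.

Lemma lt_mass_ge0 (q : nat -> R) : (forall n, 0 <= q n) -> forall n, 0 <= lt_mass q n.
Proof. intros Hq n. induction n as [|n IH]; simpl; [lra|]. specialize (Hq n). lra. Qed.

Lemma lt_mass_add_le1 (q : nat -> R) : is_strategy q -> forall n, lt_mass q n + q n <= 1.
Proof.
  intros [Hq0 [Hq1 _]] n. change (lt_mass q (S n) <= 1). rewrite lt_mass_S.
  now apply sum_n_le_is_series.
Qed.

Lemma strategy_single_support (p : nat -> R) (k : nat) : is_strategy p ->
  (forall n, n <> k -> p n = 0) -> forall n, p n = delta k n.
Proof.
  intros [_ [Hp1 _]] Hp n. unfold delta.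
  destruct (Nat.eqb_spec n k) as [->|Hn]; [|now apply Hp].
  rewrite <- (is_series_unique _ _ Hp1).
  symmetry. now apply is_series_unique, is_series_single_support.
Qed.

Lemma strategy_two_support (p : nat -> R) : is_strategy p ->
  (forall n, (1 < n)%nat -> p n = 0) -> p 0%nat + p 1%nat = 1.
Proof.
  intros [_ [Hp1 _]] Hp.
  rewrite <- (is_series_unique _ _ Hp1), (is_series_unique _ _ (is_series_finite_support p 1 Hp)).
  rewrite sum_Sn, sum_O. reflexivity.
Qed.

Lemma delta_strategy (k : nat) : is_strategy (delta k).
Proof.
  assert (Hoff : forall n, n <> k -> delta k n = 0).
  { intros n Hn. unfold delta. now rewrite (proj2 (Nat.eqb_neq n k) Hn). }
  assert (Hk : delta k k = 1) by (unfold delta; now rewrite Nat.eqb_refl).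
  split; [|split].
  - intros n. unfold delta. destruct (Nat.eqb n k); lra.
  - rewrite <- Hk. now apply is_series_single_support.
  - exists (INR k * delta k k).
    apply (is_series_single_support (fun n => INR n * delta k n)).
    intros n Hn. rewrite Hoff by exact Hn. ring.
Qed.

Lemma ex_series_mul_bounded (p c : nat -> R) : is_strategy p ->
  (forall n, 0 <= c n <= 1) -> ex_series (fun n => p n * c n).
Proof.
  intros [Hp0 [Hp1 _]] Hc.
  apply (ex_series_le (V := R_CompleteNormedModule) _ p); [|now exists 1].
  intros n. change norm with Rabs; simpl.
  specialize (Hp0 n). specialize (Hc n).
  rewrite Rabs_pos_eq by nra. nra.
Qed.

Definition pure_payoff (v : R) (q : nat -> R) (n : nat) : R :=
  v * lt_mass q n + v / 2 * q n - INR n.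

Definition best_response (v : R) (p q : nat -> R) : Prop :=
  forall p', is_strategy p' -> payoff v p' q <= payoff v p q.

Lemma is_series_payoff (v : R) (p q : nat -> R) : is_strategy p -> is_strategy q ->
  is_series (fun n => p n * pure_payoff v q n) (payoff v p q).
Proof.
  intros Hp Hq. pose proof Hq as [Hq0 _].
  assert (Hgt : ex_series (fun n => p n * lt_mass q n)).
  { apply ex_series_mul_bounded; [exact Hp|]. intros n.
    pose proof (lt_mass_ge0 q Hq0 n). pose proof (lt_mass_add_le1 q Hq n).
    specialize (Hq0 n). lra. }
  assert (Heq : ex_series (fun n => p n * q n)).
  { apply ex_series_mul_bounded; [exact Hp|]. intros n.
    pose proof (lt_mass_ge0 q Hq0 n). pose proof (lt_mass_add_le1 q Hq n).
    specialize (Hq0 n). lra. }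
  pose proof (is_series_lincomb 1 (-1) _ _ _ _
    (is_series_lincomb v (v / 2) _ _ _ _ (Series_correct _ Hgt) (Series_correct _ Heq))
    (Series_correct _ (proj2 (proj2 Hp)))) as Hlin.
  replace (payoff v p q) with (1 * (v * Series (fun n => p n * lt_mass q n)
    + v / 2 * Series (fun n => p n * q n)) + -1 * Series (fun n => INR n * p n))
    by (unfold payoff, prob_gt, prob_eq, mean; ring).
  revert Hlin. apply is_series_ext. intros n. unfold pure_payoff. simpl. ring.
Qed.

Section PayoffBounds.

Variables (v : R) (p q : nat -> R).
Hypotheses (Hp : is_strategy p) (Hq : is_strategy q).

Lemma is_series_payoff_gap (M : R) :
  is_series (fun n => p n * (M - pure_payoff v q n)) (M - payoff v p q).
Proof.
  pose proof (is_series_lincomb M (-1) _ _ _ _ (proj1 (proj2 Hp)) (is_series_payoff v p q Hp Hq))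
    as Hlin.
  replace (M - payoff v p q) with (M * 1 + -1 * payoff v p q) by ring.
  revert Hlin. apply is_series_ext. intros n. simpl. ring.
Qed.

Lemma payoff_le_of_pure_payoff_le (M : R) :
  (forall n, pure_payoff v q n <= M) -> payoff v p q <= M.
Proof.
  intros HM.
  assert (Hgap : forall n, 0 <= p n * (M - pure_payoff v q n)).
  { intros n. apply Rmult_le_pos; [apply Hp|]. specialize (HM n). lra. }
  pose proof (is_series_term_le _ _ Hgap (is_series_payoff_gap M) 0). pose proof (Hgap 0%nat).
  lra.
Qed.

Lemma strategy_vanishes_of_pure_payoff_lt (M : R) (k : nat) :
  (forall n, pure_payoff v q n <= M) -> M <= payoff v p q ->
  pure_payoff v q k < M -> p k = 0.
Proof.
  intros HM Hpay Hk.
  assert (Hgap : forall n, 0 <= p n * (M - pure_payoff v q n)).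
  { intros n. apply Rmult_le_pos; [apply Hp|]. specialize (HM n). lra. }
  pose proof (is_series_term_le _ _ Hgap (is_series_payoff_gap M) k).
  pose proof (proj1 Hp k). nra.
Qed.

End PayoffBounds.

Lemma payoff_delta (v : R) (k : nat) (q : nat -> R) :
  is_strategy q -> payoff v (delta k) q = pure_payoff v q k.
Proof.
  intros Hq.
  rewrite <- (is_series_unique _ _ (is_series_payoff v (delta k) q (delta_strategy k) Hq)).
  apply is_series_unique.
  replace (pure_payoff v q k) with (delta k k * pure_payoff v q k)
    by (unfold delta; rewrite Nat.eqb_refl; ring).
  apply (is_series_single_support (fun n => delta k n * pure_payoff v q n)).
  intros n Hn. unfold delta. rewrite (proj2 (Nat.eqb_neq n k) Hn). ring.
Qed.

Lemma pure_payoff_le_best_response (v : R) (p q : nat -> R) (k : nat) :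
  is_strategy q -> best_response v p q -> pure_payoff v q k <= payoff v p q.
Proof.
  intros Hq Hbr. rewrite <- (payoff_delta v k q Hq). apply Hbr, delta_strategy.
Qed.

Section WeakBidder.

Variables (v : R) (p : nat -> R).
Hypotheses (Hv : 0 < v) (Hv2 : v <= 2) (Hp : is_strategy p).

Lemma pure_payoff_pos_bid_gap (n : nat) : (1 <= n)%nat ->
  pure_payoff v p n <= pure_payoff v p 0 - (1 - v / 2).
Proof.
  intros Hn. pose proof (proj1 Hp) as Hp0.
  unfold pure_payoff. change (lt_mass p 0) with 0. change (INR 0) with 0.
  destruct n as [|[|n]]; [lia| |].
  - pose proof (lt_mass_add_le1 p Hp 1) as Hle. simpl in Hle.
    pose proof (Hp0 0%nat). pose proof (Hp0 1%nat). simpl. nra.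
  - pose proof (lt_mass_add_le1 p Hp (S (S n))). pose proof (lt_mass_ge0 p Hp0 (S (S n))).
    pose proof (Hp0 (S (S n))). pose proof (Hp0 0%nat).
    assert (2 <= INR (S (S n))) by (rewrite !S_INR; pose proof (pos_INR n); lra).
    nra.
Qed.

Lemma pure_payoff_le_zero_bid (n : nat) : pure_payoff v p n <= pure_payoff v p 0.
Proof.
  destruct n as [|n]; [lra|].
  pose proof (pure_payoff_pos_bid_gap (S n) ltac:(lia)). lra.
Qed.

Lemma zero_bid_best_response : best_response v (delta 0) p.
Proof.
  intros q' Hq'. rewrite (payoff_delta v 0 p Hp).
  exact (payoff_le_of_pure_payoff_le v q' p Hq' Hp _ pure_payoff_le_zero_bid).
Qed.

Lemma best_response_is_zero_bid (q : nat -> R) : v < 2 -> is_strategy q ->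
  best_response v q p -> forall n, q n = delta 0 n.
Proof.
  intros Hv2' Hq Hbr. apply (strategy_single_support q 0 Hq). intros n Hn.
  apply (strategy_vanishes_of_pure_payoff_lt v q p Hq Hp (pure_payoff v p 0)).
  - exact pure_payoff_le_zero_bid.
  - exact (pure_payoff_le_best_response v q p 0 Hp Hbr).
  - pose proof (pure_payoff_pos_bid_gap n ltac:(lia)). lra.
Qed.

End WeakBidder.

Lemma pure_payoff_zero_bid_O (v : R) : pure_payoff v (delta 0) 0 = v / 2.
Proof. unfold pure_payoff, delta. simpl. ring. Qed.

Lemma pure_payoff_zero_bid_S (v : R) (n : nat) :
  pure_payoff v (delta 0) (S n) = v - 1 - INR n.
Proof.
  assert (Hmass : lt_mass (delta 0) (S n) = 1).
  { induction n as [|n IH]; [unfold delta; simpl; ring|].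
    change (lt_mass (delta 0) (S n) + delta 0 (S n) = 1). rewrite IH. unfold delta. simpl. ring. }
  unfold pure_payoff. rewrite Hmass, S_INR. unfold delta. simpl. ring.
Qed.

Section StrongBidder.

Variables (v : R) (p : nat -> R).
Hypothesis Hp : is_strategy p.

Lemma pure_payoff_zero_bid_le_max (n : nat) :
  pure_payoff v (delta 0) n <= Rmax (v / 2) (v - 1).
Proof.
  destruct n as [|n].
  - rewrite pure_payoff_zero_bid_O. apply Rmax_l.
  - rewrite pure_payoff_zero_bid_S. pose proof (pos_INR n). pose proof (Rmax_r (v / 2) (v - 1)).
    lra.
Qed.

Lemma best_response_zero_bid_vanishes (n : nat) : best_response v p (delta 0) ->
  pure_payoff v (delta 0) n < Rmax (v / 2) (v - 1) -> p n = 0.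
Proof.
  intros Hbr. apply (strategy_vanishes_of_pure_payoff_lt v p (delta 0) Hp (delta_strategy 0)).
  - exact pure_payoff_zero_bid_le_max.
  - pose proof (pure_payoff_le_best_response v p (delta 0) 0 (delta_strategy 0) Hbr) as H0.
    pose proof (pure_payoff_le_best_response v p (delta 0) 1 (delta_strategy 0) Hbr) as H1.
    rewrite pure_payoff_zero_bid_O in H0. rewrite pure_payoff_zero_bid_S in H1.
    simpl INR in H1. apply Rmax_lub; lra.
Qed.

Lemma best_response_zero_bid_of_payoff_ge :
  Rmax (v / 2) (v - 1) <= payoff v p (delta 0) -> best_response v p (delta 0).
Proof.
  intros Hpay p' Hp'. eapply Rle_trans; [|exact Hpay].
  exact (payoff_le_of_pure_payoff_le v p' (delta 0) Hp' (delta_strategy 0) _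
           pure_payoff_zero_bid_le_max).
Qed.

Lemma payoff_two_point_zero_bid : (forall n, (1 < n)%nat -> p n = 0) ->
  payoff v p (delta 0) = p 0%nat * (v / 2) + p 1%nat * (v - 1).
Proof.
  intros Hsupp.
  rewrite <- (is_series_unique _ _ (is_series_payoff v p (delta 0) Hp (delta_strategy 0))).
  apply is_series_unique.
  replace (p 0%nat * (v / 2) + p 1%nat * (v - 1))
    with (sum_n (fun n => p n * pure_payoff v (delta 0) n) 1).
  - apply is_series_finite_support. intros n Hn. rewrite Hsupp by exact Hn. ring.
  - rewrite sum_Sn, sum_O, pure_payoff_zero_bid_O, pure_payoff_zero_bid_S.
    unfold plus; simpl. ring.
Qed.

Lemma best_response_zero_bid_iff : best_response v p (delta 0) <->
  ((1 < v / 2 -> forall n, p n = delta 1 n) /\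
   (v / 2 = 1 -> exists alpha, 0 <= alpha <= 1 /\
      forall n, p n = (1 - alpha) * delta 0 n + alpha * delta 1 n) /\
   (v / 2 < 1 -> forall n, p n = delta 0 n)).
Proof.
  pose proof (proj1 Hp) as Hp0.
  assert (HINR : forall n, 1 <= INR (S n)) by (intros n; rewrite S_INR; pose proof (pos_INR n); lra).
  split; [intros Hbr; split; [|split]|intros (Hhigh & Hcrit & Hlow)].
  - intros Hv. apply (strategy_single_support p 1 Hp).
    intros [|[|n]] Hn; [| lia |]; apply best_response_zero_bid_vanishes; try exact Hbr;
      rewrite Rmax_right by lra.
    + rewrite pure_payoff_zero_bid_O. lra.
    + rewrite pure_payoff_zero_bid_S. specialize (HINR n). lra.
  - intros Hv.
    assert (Hsupp : forall n, (1 < n)%nat -> p n = 0).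
    { intros [|[|n]] Hn; try lia. apply best_response_zero_bid_vanishes; [exact Hbr|].
      rewrite Rmax_right, pure_payoff_zero_bid_S by lra. specialize (HINR n). lra. }
    pose proof (strategy_two_support p Hp Hsupp). pose proof (Hp0 0%nat). pose proof (Hp0 1%nat).
    exists (p 1%nat). split; [lra|].
    intros [|[|n]]; unfold delta; simpl; [lra|ring|]. rewrite Hsupp by lia. ring.
  - intros Hv. apply (strategy_single_support p 0 Hp).
    intros [|n] Hn; [lia|]. apply best_response_zero_bid_vanishes; [exact Hbr|].
    rewrite Rmax_left, pure_payoff_zero_bid_S by lra. pose proof (pos_INR n). lra.
  - apply best_response_zero_bid_of_payoff_ge.
    destruct (Rtotal_order (v / 2) 1) as [Hv|[Hv|Hv]].
    + replace p with (delta 0) by (apply functional_extensionality; intros n; now rewrite Hlow).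
      rewrite payoff_delta, pure_payoff_zero_bid_O, Rmax_left by (apply delta_strategy || lra).
      lra.
    + destruct (Hcrit Hv) as (alpha & Halpha & Hmix).
      assert (Hsupp : forall n, (1 < n)%nat -> p n = 0).
      { intros [|[|n]] Hn; [lia|lia|]. rewrite Hmix. unfold delta. simpl. ring. }
      rewrite (payoff_two_point_zero_bid Hsupp), !Hmix, Rmax_right by lra.
      replace v with 2 by lra. unfold delta. simpl. lra.
    + replace p with (delta 1) by (apply functional_extensionality; intros n; now rewrite Hhigh).
      rewrite payoff_delta, pure_payoff_zero_bid_S, Rmax_right by (apply delta_strategy || lra).
      simpl. lra.
Qed.

End StrongBidder.

Theorem theorem4 (v1 v2 : R) (p q : nat -> R) :
  v2 <= v1 -> 0 < v2 -> v2 < 2 ->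
  is_strategy p -> is_strategy q ->
  (nash v1 v2 p q <->
   ((forall n, q n = delta 0 n) /\
    (1 < v1 / 2 -> forall n, p n = delta 1 n) /\
    (v1 / 2 = 1 -> exists alpha, 0 <= alpha <= 1 /\
        forall n, p n = (1 - alpha) * delta 0 n + alpha * delta 1 n) /\
    (v1 / 2 < 1 -> forall n, p n = delta 0 n))).
Proof.
  intros _ Hv2 Hv22 Hp Hq. split.
  - intros (_ & _ & Hbr1 & Hbr2).
    pose proof (best_response_is_zero_bid v2 p ltac:(lra) ltac:(lra) Hp q Hv22 Hq Hbr2) as Hq0.
    replace q with (delta 0) in Hbr1 by (apply functional_extensionality; intros n; now rewrite Hq0).
    split; [exact Hq0|]. now apply best_response_zero_bid_iff.
  - intros [Hq0 Hcases].
    replace q with (delta 0) by (apply functional_extensionality; intros n; now rewrite Hq0).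
    split; [exact Hp|]. split; [exact (delta_strategy 0)|]. split.
    + now apply best_response_zero_bid_iff.
    + apply zero_bid_best_response; [exact Hv2 | lra | exact Hp].
Qed.
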